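(* Frankl's conjecture is equivalent to Nagel's conjecture.
   Context: A family $\mathcal{A}$ of sets is union-closed if $A\cup B\in\mathcal{A}$ for all $A,B\in\mathcal{A}$. Frankl's conjecture: for any finite union-closed family of finite sets, other than the family consisting only of the empty set, there exists an element that belongs to at least half of the sets in the family. Nagel's conjecture: let $\mathcal{F}\subset 2^{\{1,2,\dots,n\}}$ be a union-closed family with $\bigcup_{A\in\mathcal{F}}A=\{1,2,\dots,n\}$, where the elements of the ground set are labeled so that $|\{F\in\mathcal{F}:1\in F\}|\ge|\{F\in\mathcal{F}:2\in F\}|\ge\cdots\ge|\{F\in\mathcal{F}:n\in F\}|$; then for every $k\in\{1,2,\dots,n\}$ it holds that $|\{F\in\mathcal{F}:k\in F\}|\ge\frac{1}{2^{k-1}+1}|\mathcal{F}|$. (Under this labeling, Frankl's conjecture says $|\{F\in\mathcal{F}:1\in F\}|\ge\frac12|\mathcal{F}|$.) *)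

From mathcomp Require Import all_boot.
Set Implicit Arguments. Unset Strict Implicit. Unset Printing Implicit Defensive.

Definition union_closed (T : finType) (F : {set {set T}}) : Prop :=
  forall A B, A \in F -> B \in F -> A :|: B \in F.

Definition freq (T : finType) (F : {set {set T}}) (x : T) : nat :=
  #|[set A in F | x \in A]|.

(* Finite families of finite sets are modelled on the
   finite ground set 'I_n, n arbitrary. *)
Definition Frankl_conjecture : Prop :=
  forall (n : nat) (F : {set {set 'I_n}}),
    union_closed F -> F != set0 -> F != [set set0] ->
    exists2 x : 'I_n, x \in \bigcup_(A in F) A & #|F| <= 2 * freq F x.

(* Nagel: ground set {1,...,n} is modelled by 'I_n, label k+1 <-> index k,
   so the bound 1/(2^(k-1)+1) for label k becomes 1/(2^k+1) for index k. *)
Definition Nagel_conjecture : Prop :=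
  forall (n : nat) (F : {set {set 'I_n}}),
    union_closed F -> \bigcup_(A in F) A = [set: 'I_n] ->
    (forall i j : 'I_n, i <= j -> freq F j <= freq F i) ->
    forall k : 'I_n, #|F| <= (2 ^ k + 1) * freq F k.

From mathcomp Require Import all_boot.
Set Implicit Arguments. Unset Strict Implicit. Unset Printing Implicit Defensive.

(* Frankl implies Nagel: to bound the frequency of the k-th most frequent
   element, delete the k more frequent elements S from every member.  The
   resulting family is still union closed, so Frankl yields x outside S lying
   in at least half of its members; each of them comes from at most 2^k
   members of F, whence |F| <= (2^k + 1) freq F x <= (2^k + 1) freq F k.
   Nagel implies Frankl: relabel the covered elements by decreasing
   frequency; the case k = 0 of Nagel is exactly Frankl. *)

Lemma union_closed_imset (T U : finType) (g : {set T} -> {set U})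
    (F : {set {set T}}) :
  {morph g : A B / A :|: B} -> union_closed F -> union_closed (g @: F).
Proof.
move=> gU ucF _ _ /imsetP[A AF ->] /imsetP[B BF ->].
by rewrite -gU imset_f ?ucF.
Qed.

Lemma freq_add_nonmembers (T : finType) (F : {set {set T}}) (x : T) :
  freq F x + #|[set A in F | x \notin A]| = #|F|.
Proof.
rewrite /freq -(cardsID [set A : {set T} | x \in A] F).
by congr (_ + _); apply: eq_card => A; rewrite !inE andbC.
Qed.

Lemma card_ord_ltn (n k : nat) : k <= n -> #|[set i : 'I_n | i < k]| = k.
Proof.
move=> kn; have widen_inj : injective (widen_ord kn) by move=> i j [] /val_inj.
rewrite -[RHS]card_ord -(card_imset _ widen_inj); apply: eq_card => i.
rewrite inE; apply/idP/imsetP => [ik | [j _ ->]].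
- by exists (Ordinal ik); last apply: val_inj.
- exact: (ltn_ord j).
Qed.

Section FamSetD.

Variables (T : finType) (S : {set T}).

Definition fam_setD (F : {set {set T}}) : {set {set T}} := [set A :\: S | A in F].

Lemma union_closed_fam_setD (F : {set {set T}}) :
  union_closed F -> union_closed (fam_setD F).
Proof. by apply: union_closed_imset => A B; rewrite setDUl. Qed.

(* A member A is recovered from A :\: S and A :&: S. *)
Lemma card_le_exp_fam_setD (F : {set {set T}}) :
  #|F| <= 2 ^ #|S| * #|fam_setD F|.
Proof.
pose g A := (A :\: S, A :&: S).
have g_inj : injective g by move=> A B [eD eI]; rewrite -(setID A S) eD eI setID.
rewrite -(card_imset _ g_inj) mulnC -card_powerset -cardsX subset_leq_card //.
apply/subsetP => _ /imsetP[A AF ->]; rewrite !inE /=.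
by rewrite subsetIr andbT; apply: imset_f.
Qed.

Lemma freq_fam_setD_le (F : {set {set T}}) (x : T) :
  freq (fam_setD F) x <= freq F x.
Proof.
apply: leq_trans (leq_imset_card (fun A : {set T} => A :\: S) _).
apply/subset_leq_card/subsetP => B; rewrite inE => /andP[/imsetP[A AF ->]].
by rewrite inE => /andP[_ xA]; apply: imset_f; rewrite inE AF xA.
Qed.

Lemma fam_setD_nonmembers (F : {set {set T}}) (x : T) : x \notin S ->
  fam_setD [set A in F | x \notin A] \subset [set B in fam_setD F | x \notin B].
Proof.
move=> xS; apply/subsetP => B /imsetP[A /[!inE] /andP[AF xA] ->].
by rewrite !inE negb_and xA orbT andbT; apply: imset_f.
Qed.

Lemma freq_bound_of_fam_setD (F : {set {set T}}) (x : T) : x \notin S ->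
  #|fam_setD F| <= 2 * freq (fam_setD F) x -> #|F| <= (2 ^ #|S| + 1) * freq F x.
Proof.
move=> xS frankl_setD.
have le_nonmembers : #|[set A in F | x \notin A]| <= 2 ^ #|S| * freq (fam_setD F) x.
  apply: leq_trans (card_le_exp_fam_setD _) _; rewrite leq_mul2l; apply/orP; right.
  apply: leq_trans (subset_leq_card (fam_setD_nonmembers F xS)) _.
  by move: frankl_setD; rewrite -(freq_add_nonmembers (fam_setD F) x) mul2n -addnn leq_add2l.
rewrite -(freq_add_nonmembers F x) mulnDl mul1n addnC leq_add2r.
by apply: leq_trans le_nonmembers _; rewrite leq_mul2l freq_fam_setD_le orbT.
Qed.

End FamSetD.

Lemma cover_neq0 (T : finType) (F : {set {set T}}) :
  F != set0 -> F != [set set0] -> cover F != set0.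
Proof.
move=> F0; apply: contraNneq => cover0.
rewrite eqEcard cards1 card_gt0 F0 andbT; apply/subsetP => A AF.
by rewrite inE -subset0 -cover0 bigcup_sup.
Qed.

Section Preimage.

Variables (T U : finType) (f : U -> T) (F : {set {set T}}).

Definition fam_preimset : {set {set U}} := [set f @^-1: A | A : {set T} in F].

Lemma preimset_inj_in :
  {subset cover F <= codom f} -> {in F &, injective (fun A : {set T} => f @^-1: A)}.
Proof.
move=> coverF.
have sub (A B : {set T}) : A \in F -> f @^-1: A = f @^-1: B -> A \subset B.
  move=> AF eAB; apply/subsetP => u uA.
  have /codomP[i def_u] : u \in codom f by apply/coverF/bigcupP; exists A.
  have : i \in f @^-1: A by rewrite inE -def_u.
  by rewrite eAB inE -def_u.
by move=> A B AF BF eAB; apply/eqP; rewrite eqEsubset !sub.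
Qed.

Lemma freq_fam_preimset i :
  {in F &, injective (fun A : {set T} => f @^-1: A)} -> freq fam_preimset i = freq F (f i).
Proof.
move=> f_inj.
have f_inj_i : {in [set A in F | f i \in A] &, injective (fun A : {set T} => f @^-1: A)}.
  by apply: sub_in2 f_inj => A /[!inE] /andP[].
rewrite /freq -(card_in_imset f_inj_i); apply: eq_card => B; rewrite inE.
apply/andP/imsetP => [[/imsetP[A AF ->]] | [A]].
  by rewrite inE => fiA; exists A; rewrite // inE AF.
by rewrite inE => /andP[AF fiA] ->; rewrite imset_f // inE.
Qed.

Lemma cover_fam_preimset : (forall i, f i \in cover F) -> cover fam_preimset = [set: U].
Proof.
move=> fF; apply/setP => i; rewrite inE cover_imset.
by have /bigcupP[A AF fiA] := fF i; apply/bigcupP; exists A; rewrite ?inE.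
Qed.

End Preimage.

Lemma nonincreasing_enum (T : finType) (U : {set T}) (w : T -> nat) (x0 : T) :
  exists2 f : 'I_#|U| -> T, U =i codom f & forall i j : 'I_#|U|, i <= j -> w (f j) <= w (f i).
Proof.
pose r a b := w b <= w a; pose s := sort r (enum U).
have size_s : size s = #|U| by rewrite size_sort cardE.
have s_U : s =i U by move=> u; rewrite mem_sort mem_enum.
exists (fun i => nth x0 s i) => [u | i j ij].
  apply/idP/codomP => [uU | [i ->]]; last by rewrite -s_U mem_nth ?size_s.
  have ui : index u s < #|U| by rewrite -size_s index_mem s_U.
  by exists (Ordinal ui); rewrite nth_index ?s_U.
have r_trans : transitive r by move=> b a c /= ba cb; apply: leq_trans cb ba.
apply: (sorted_leq_nth r_trans) => //; rewrite ?inE ?size_s //.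
- by move=> a; rewrite /r.
- by apply: sort_sorted => a b; rewrite /r leq_total.
Qed.

Lemma Nagel_of_Frankl : Frankl_conjecture -> Nagel_conjecture.
Proof.
move=> frankl n F ucF coverF sortedF k.
pose S := [set i : 'I_n | i < k].
have [A0 A0F kA0] : exists2 A0, A0 \in F & k \in A0 by apply/bigcupP; rewrite coverF inE.
have kA0S : k \in A0 :\: S by rewrite !inE ltnn kA0.
have A0S_setD : A0 :\: S \in fam_setD S F by apply: imset_f.
have setD_neq0 : fam_setD S F != set0 by apply/set0Pn; exists (A0 :\: S).
have setD_neq1 : fam_setD S F != [set set0].
  by apply: contraTneq A0S_setD => ->; rewrite inE; apply: contraTneq kA0S => ->; rewrite inE.
have [x /bigcupP[_ /imsetP[A _ ->] xAS] frankl_setD] :=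
  frankl n (fam_setD S F) (union_closed_fam_setD ucF) setD_neq0 setD_neq1.
have xS : x \notin S by move: xAS; rewrite inE => /andP[].
apply: leq_trans (freq_bound_of_fam_setD xS frankl_setD) _.
rewrite card_ord_ltn ?(ltnW (ltn_ord k)) // leq_mul2l sortedF ?orbT //.
by move: xS; rewrite inE -leqNgt.
Qed.

Lemma Frankl_of_Nagel : Nagel_conjecture -> Frankl_conjecture.
Proof.
move=> nagel n F ucF F0 F1.
have [x0 x0F] := set0Pn _ (cover_neq0 F0 F1).
have [f coverF_f sorted_f] := nonincreasing_enum (cover F) (freq F) x0.
have f_cover i : f i \in cover F by rewrite coverF_f codom_f.
have f_inj : {in F &, injective (fun A : {set 'I_n} => f @^-1: A)}.
  by apply: preimset_inj_in => u; rewrite coverF_f.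
have m_gt0 : 0 < #|cover F| by rewrite card_gt0; apply/set0Pn; exists x0.
have sorted_fam_preimset (i j : 'I_#|cover F|) :
    i <= j -> freq (fam_preimset f F) j <= freq (fam_preimset f F) i.
  by move=> ij; rewrite !freq_fam_preimset // sorted_f.
have := nagel _ _ (union_closed_imset (preimsetU f) ucF) (cover_fam_preimset f_cover)
  sorted_fam_preimset (Ordinal m_gt0).
rewrite card_in_imset // freq_fam_preimset // => frankl_bound.
by exists (f (Ordinal m_gt0)); [apply: f_cover | exact: frankl_bound].
Qed.

Theorem mainTheorem2 : Frankl_conjecture <-> Nagel_conjecture.
Proof. by split; [apply: Nagel_of_Frankl | apply: Frankl_of_Nagel]. Qed.
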